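(* Let $A\in\mathbb{R}^{m\times m}$ and $C\in\mathbb{R}^{n\times n}$ be symmetric and $B\in\mathbb{R}^{n\times m}$, with $\mu I\preceq A\preceq LI$ for some $0<\mu\le L$, $\|B\|_2\le L$, $\|C\|_2\le L$, and $C+BA^{-1}B^\top\succ0$. Let $r>0$ and $M=\begin{pmatrix}-C & -B\\ rB^\top & -rA\end{pmatrix}$. Let $\lambda=\lambda_0+i\lambda_1$ ($\lambda_0,\lambda_1\in\mathbb{R}$) be any eigenvalue of $M$. Then: (1) $|\lambda_1|\le\sqrt{r}\,L$; (2) if $\lambda_1\neq0$, then $\lambda_0\le-\frac{\mu(r-\kappa)}{2}$; (3) if $r\ge1$, then $\lambda_0^2+\lambda_1^2\le\|M\|_2^2\le4r^2L^2$; (4) if $r>\kappa$ and $\lambda_1=0$, then $\lambda_0\le-\mu_x$; (5) if $r>\kappa$ (and $\mu_x>0$), then $\lambda_0<0$.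
   Context: $\kappa=L/\mu$ and $\mu_x=\min\{L,\lambda_{\min}(C+BA^{-1}B^\top)\}$. *)

From HB Require Import structures.
From mathcomp Require Import all_boot all_order all_algebra.
From mathcomp Require Import classical_sets reals.
From mathcomp Require Export complex.
Set Implicit Arguments.
Unset Strict Implicit.
Unset Printing Implicit Defensive.
Import Order.TTheory GRing.Theory Num.Theory.
Local Open Scope ring_scope.
Local Open Scope classical_set_scope.

Definition vnorm2 {R : realType} {k : nat} (v : 'cV[R]_k) : R :=
  Num.sqrt (\sum_(i < k) v i 0 ^+ 2).

Definition opnorm2 {R : realType} {p q : nat} (M : 'M[R]_(p, q)) : R :=
  sup [set vnorm2 (M *m x) | x in [set x : 'cV[R]_q | vnorm2 x = 1]].

Definition psd {R : realType} {k : nat} (S : 'M[R]_k) : Prop :=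
  forall x : 'cV[R]_k, 0 <= (x^T *m S *m x) 0 0.
Definition pd {R : realType} {k : nat} (S : 'M[R]_k) : Prop :=
  forall x : 'cV[R]_k, x != 0 -> 0 < (x^T *m S *m x) 0 0.

Definition lambda_min {R : realType} {k : nat} (S : 'M[R]_k) : R :=
  inf [set a : R | eigenvalue S a].

Definition cplx_mx {R : realType} {p q : nat} (M : 'M[R]_(p, q)) : 'M[R[i]]_(p, q) :=
  map_mx (fun x : R => (x%:C)%C) M.

(* Eigenvalues of M are eigenvalues of M^T; write a complex eigenvector of M^T as (x, y)
   and put X = |x|^2, Y = |y|^2, p = x^* B y.  Pairing the two block rows with x and y gives
     - x^* C x + r p = lam X   and   - conj p - r y^* A y = lam Y.
   When Im lam <> 0, the imaginary parts force X = r Y, so |Im lam| Y = |Im p| <= L sqrt (X Y)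
   yields (1), and the first real part plus r times the second yields
   2 Re lam X = - x^* C x - r^2 y^* A y <= (L - r mu) X, which is (2).
   When lam is real, take a real eigenvector and eliminate B^T x with the second row: the
   Schur complement form becomes  x^T (C + B A^-1 B^T) x = lam (r Y + lam y^T A^-1 y) - lam X.
   Its positivity excludes lam >= 0 as soon as r mu > L, and its lower bound
   lambda_min |x|^2 gives lam <= - lambda_min; the case x = 0 forces lam <= - r mu < - L.
   Finally (3) is |lam| <= ||M^T|| = ||M|| together with a blockwise estimate of ||M||. *)

From HB Require Import structures.
From mathcomp Require Import all_boot all_order all_algebra.
From mathcomp Require Import classical_sets boolp reals complex.
From mathcomp Require Import sesquilinear spectral.
From mathcomp Require Import ring lra.
Import Order.TTheory GRing.Theory Num.Theory.
Local Open Scope ring_scope.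
Set Implicit Arguments.
Unset Strict Implicit.
Unset Printing Implicit Defensive.

Section RealInnerProduct.
Variable R : realType.
Implicit Types (k p q : nat).

Definition dot k (u v : 'cV[R]_k) : R := (u^T *m v) 0 0.
Definition sqnorm k (u : 'cV[R]_k) : R := dot u u.

Lemma dotE k (u v : 'cV[R]_k) : dot u v = \sum_i u i 0 * v i 0.
Proof. by rewrite /dot mxE; apply: eq_bigr => i _; rewrite mxE. Qed.

Lemma dotC k (u v : 'cV[R]_k) : dot u v = dot v u.
Proof. by rewrite !dotE; apply: eq_bigr => i _; rewrite mulrC. Qed.

Lemma dotDr k (u v w : 'cV[R]_k) : dot u (v + w) = dot u v + dot u w.
Proof. by rewrite /dot mulmxDr mxE. Qed.

Lemma dotZr k (u v : 'cV[R]_k) a : dot u (a *: v) = a * dot u v.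
Proof. by rewrite /dot -scalemxAr mxE. Qed.

Lemma dotNr k (u v : 'cV[R]_k) : dot u (- v) = - dot u v.
Proof. by rewrite /dot mulmxN mxE. Qed.

Lemma dotBr k (u v w : 'cV[R]_k) : dot u (v - w) = dot u v - dot u w.
Proof. by rewrite dotDr dotNr. Qed.

Lemma dotDl k (u v w : 'cV[R]_k) : dot (v + w) u = dot v u + dot w u.
Proof. by rewrite dotC dotDr !(dotC u). Qed.

Lemma dotZl k (u v : 'cV[R]_k) a : dot (a *: v) u = a * dot v u.
Proof. by rewrite dotC dotZr dotC. Qed.

Lemma dotNl k (u v : 'cV[R]_k) : dot (- v) u = - dot v u.
Proof. by rewrite dotC dotNr dotC. Qed.

Lemma dot0r k (u : 'cV[R]_k) : dot u 0 = 0.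
Proof. by rewrite /dot mulmx0 mxE. Qed.

Lemma dotMr p q (P : 'M[R]_(p, q)) u v : dot u (P *m v) = dot (P^T *m u) v.
Proof. by rewrite /dot trmx_mul trmxK mulmxA. Qed.

Lemma dot_trmx p q (P : 'M[R]_(p, q)) u v : dot v (P^T *m u) = dot u (P *m v).
Proof. by rewrite dotMr trmxK dotC. Qed.

Lemma dot_sym k (S : 'M[R]_k) u v : S^T = S -> dot u (S *m v) = dot v (S *m u).
Proof. by move=> Ss; rewrite dotMr Ss dotC. Qed.

Lemma dot_col_mx p q (u v : 'cV[R]_p) (w z : 'cV[R]_q) :
  dot (col_mx u w) (col_mx v z) = dot u v + dot w z.
Proof.
rewrite !dotE big_split_ord /=.
by congr (_ + _); apply: eq_bigr => i _; rewrite ?col_mxEu ?col_mxEd.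
Qed.

Lemma formE k (S : 'M[R]_k) x : (x^T *m S *m x) 0 0 = dot x (S *m x).
Proof. by rewrite /dot mulmxA. Qed.

Lemma sqnormE k (u : 'cV[R]_k) : sqnorm u = \sum_i u i 0 ^+ 2.
Proof. by rewrite /sqnorm dotE; apply: eq_bigr => i _; rewrite expr2. Qed.

Lemma vnorm2E k (u : 'cV[R]_k) : vnorm2 u = Num.sqrt (sqnorm u).
Proof. by rewrite /vnorm2 sqnormE. Qed.

Lemma sqnorm_ge0 k (u : 'cV[R]_k) : 0 <= sqnorm u.
Proof. by rewrite sqnormE sumr_ge0 // => i _; rewrite sqr_ge0. Qed.

Lemma sqnorm_eq0 k (u : 'cV[R]_k) : (sqnorm u == 0) = (u == 0).
Proof.
apply/idP/eqP => [|->]; last by rewrite /sqnorm dot0r.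
rewrite sqnormE psumr_eq0 => [/allP u0|i _]; last by rewrite sqr_ge0.
apply/matrixP => i j; rewrite ord1 mxE; apply/eqP.
by rewrite -sqrf_eq0; apply: u0 (mem_index_enum _).
Qed.

Lemma sqnorm_gt0 k (u : 'cV[R]_k) : (0 < sqnorm u) = (u != 0).
Proof. by rewrite lt_def sqnorm_ge0 sqnorm_eq0 andbT. Qed.

Lemma sqnormN k (u : 'cV[R]_k) : sqnorm (- u) = sqnorm u.
Proof. by rewrite /sqnorm dotNl dotNr opprK. Qed.

Lemma sqnormZ k (u : 'cV[R]_k) a : sqnorm (a *: u) = a ^+ 2 * sqnorm u.
Proof. by rewrite /sqnorm dotZl dotZr mulrA expr2. Qed.

Lemma sqnorm_col_mx p q (u : 'cV[R]_p) (w : 'cV[R]_q) :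
  sqnorm (col_mx u w) = sqnorm u + sqnorm w.
Proof. exact: dot_col_mx. Qed.

Lemma sqnormD_le k (u v : 'cV[R]_k) : sqnorm (u + v) <= 2 * sqnorm u + 2 * sqnorm v.
Proof.
have parallelogram : sqnorm (u + v) + sqnorm (u - v) = 2 * sqnorm u + 2 * sqnorm v.
  by rewrite /sqnorm !dotDl !dotNl !dotDr !dotNr (dotC v u); ring.
by have := sqnorm_ge0 (u - v); lra.
Qed.

Lemma discriminant_le (a b c : R) : 0 <= c ->
  (forall t, 0 <= a + 2 * b * t + c * t ^+ 2) -> b ^+ 2 <= a * c.
Proof.
move=> c_ge0 pos; have a_ge0 : 0 <= a by have := pos 0; rewrite mulr0 expr0n mulr0 !addr0.
have [c_gt0|c_le0] := ltP 0 c.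
  have := pos (- b / c).
  have -> : a + 2 * b * (- b / c) + c * (- b / c) ^+ 2 = a - b ^+ 2 / c.
    by field; rewrite gt_eqF.
  by rewrite subr_ge0 ler_pdivrMr.
have c0 : c = 0 by apply/eqP; rewrite eq_le c_le0 c_ge0.
rewrite c0 mulr0; have [->|b_neq0] := eqVneq b 0; first by rewrite expr0n.
have := pos (- (a + 1) / (2 * b)).
have -> : a + 2 * b * (- (a + 1) / (2 * b)) + c * (- (a + 1) / (2 * b)) ^+ 2 = -1.
  by rewrite c0 mul0r addr0; field; rewrite b_neq0.
by rewrite ler0N1.
Qed.

Lemma sym_form_cauchy_schwarz k (S : 'M[R]_k) : S^T = S ->
  (forall z, 0 <= dot z (S *m z)) ->
  forall u v, dot u (S *m v) ^+ 2 <= dot u (S *m u) * dot v (S *m v).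
Proof.
move=> Ss S_ge0 u v; apply: discriminant_le => [//|t].
have := S_ge0 (u + t *: v).
rewrite mulmxDr -scalemxAr dotDl dotZl !dotDr !dotZr (dot_sym v u Ss).
by rewrite (_ : _ + _ = dot u (S *m u) + 2 * dot u (S *m v) * t
  + dot v (S *m v) * t ^+ 2) //; ring.
Qed.

Lemma cauchy_schwarz k (u v : 'cV[R]_k) : dot u v ^+ 2 <= sqnorm u * sqnorm v.
Proof.
have := @sym_form_cauchy_schwarz k 1%:M (trmx1 _ _) _ u v; rewrite !mul1mx; apply.
by move=> z; rewrite mul1mx sqnorm_ge0.
Qed.

End RealInnerProduct.

Section OperatorNorm.
Variable R : realType.
Implicit Types (p q : nat).
Local Open Scope classical_set_scope.

Lemma vnorm2_eq1 q (x : 'cV[R]_q) : (vnorm2 x = 1) = (sqnorm x = 1).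
Proof.
rewrite vnorm2E; apply/propext; split => [|->]; last exact: sqrtr1.
by move/eqP; rewrite -[X in _ == X]sqrtr1 eqr_sqrt ?sqnorm_ge0 // => /eqP.
Qed.

Lemma opnorm2_has_ubound p q (P : 'M[R]_(p, q)) :
  has_ubound [set vnorm2 (P *m x) | x in [set x : 'cV[R]_q | vnorm2 x = 1]].
Proof.
exists (Num.sqrt (\sum_i \sum_j P i j ^+ 2)) => _ [x /= x1 <-].
rewrite vnorm2E ler_sqrt; last by do 2!apply: sumr_ge0 => ? _; rewrite sqr_ge0.
rewrite sqnormE; apply: ler_sum => i _; move: x1; rewrite vnorm2_eq1 => x1.
have -> : (P *m x) i 0 = dot (row i P)^T x.
  by rewrite dotE mxE; apply: eq_bigr => j _; rewrite !mxE.
have -> : \sum_j P i j ^+ 2 = sqnorm (row i P)^T.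
  by rewrite sqnormE; apply: eq_bigr => j _; rewrite !mxE.
by rewrite -[X in _ <= X]mulr1 -x1 cauchy_schwarz.
Qed.

Lemma opnorm2_ge0 p q (P : 'M[R]_(p, q)) : 0 <= opnorm2 P.
Proof.
rewrite /opnorm2; set E := (X in sup X).
have [[e Ee]|/nonemptyPn->] := pselect (E !=set0); last by rewrite sup0.
apply: le_trans (ub_le_sup (opnorm2_has_ubound P) Ee).
by case: Ee => x _ <-; rewrite sqrtr_ge0.
Qed.

Lemma sqnorm_mul_le p q (P : 'M[R]_(p, q)) x :
  sqnorm (P *m x) <= opnorm2 P ^+ 2 * sqnorm x.
Proof.
have [->|x_neq0] := eqVneq x 0; first by rewrite mulmx0 /sqnorm !dot0r mulr0.
have x_gt0 : 0 < sqnorm x by rewrite sqnorm_gt0.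
set s := Num.sqrt (sqnorm x); have s_gt0 : 0 < s by rewrite sqrtr_gt0.
have sx2 : s ^- 2 * sqnorm x = 1 by rewrite sqr_sqrtr ?mulVf ?gt_eqF // ltW.
have : vnorm2 (P *m (s^-1 *: x)) <= opnorm2 P.
  apply: (ub_le_sup (opnorm2_has_ubound P)); exists (s^-1 *: x) => //=.
  by rewrite vnorm2_eq1 sqnormZ exprVn.
rewrite -scalemxAr vnorm2E -(ler_pXn2r (n := 2)) ?nnegrE ?sqrtr_ge0 ?opnorm2_ge0 //.
rewrite sqr_sqrtr ?sqnorm_ge0 // sqnormZ exprVn.
by rewrite -(ler_pM2r x_gt0) mulrAC sx2 mul1r.
Qed.

Lemma opnorm2_le p q (P : 'M[R]_(p, q)) c : 0 <= c ->
  (forall x, sqnorm (P *m x) <= c ^+ 2 * sqnorm x) -> opnorm2 P <= c.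
Proof.
move=> c_ge0 Pc; rewrite /opnorm2; set E := (X in sup X).
have [E_neq0|/nonemptyPn->] := pselect (E !=set0); last by rewrite sup0.
apply: ge_sup => // _ [x /= x1 <-]; move: x1; rewrite vnorm2_eq1 => x1.
rewrite vnorm2E -(ger0_norm c_ge0) -sqrtr_sqr ler_sqrt ?sqr_ge0 //.
by rewrite -[X in _ <= X]mulr1 -x1.
Qed.

Lemma opnorm2_trmx p q (P : 'M[R]_(p, q)) : opnorm2 P^T = opnorm2 P.
Proof.
suff le_tr p' q' (Q : 'M[R]_(p', q')) : opnorm2 Q^T <= opnorm2 Q.
  by apply/eqP; rewrite eq_le le_tr /=; have := le_tr _ _ P^T; rewrite trmxK.
apply: opnorm2_le (opnorm2_ge0 Q) _ => x; set w := Q^T *m x.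
have [w0|w_neq0] := eqVneq w 0; first by rewrite w0 /sqnorm dot0r mulr_ge0 ?sqr_ge0 ?sqnorm_ge0.
have w_gt0 : 0 < sqnorm w by rewrite sqnorm_gt0.
have : sqnorm w ^+ 2 <= sqnorm x * (opnorm2 Q ^+ 2 * sqnorm w).
  rewrite {1}(_ : sqnorm w = dot x (Q *m w)); last by rewrite dotMr.
  apply: le_trans (cauchy_schwarz _ _) _.
  by rewrite ler_wpM2l ?sqnorm_ge0 ?sqnorm_mul_le.
by rewrite mulrA expr2 ler_pM2r // mulrC.
Qed.

Lemma sqnorm_mul_le_of_opnorm p q (P : 'M[R]_(p, q)) c : opnorm2 P <= c ->
  forall x, sqnorm (P *m x) <= c ^+ 2 * sqnorm x.
Proof.
move=> Pc x; apply: le_trans (sqnorm_mul_le P x) _.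
by rewrite ler_wpM2r ?sqnorm_ge0 // ler_pXn2r ?nnegrE ?opnorm2_ge0 // (le_trans (opnorm2_ge0 P)).
Qed.

Lemma form_ge_of_opnorm q (S : 'M[R]_q) c : opnorm2 S <= c ->
  forall x, - (c * sqnorm x) <= dot x (S *m x).
Proof.
move=> Sc x; have c_ge0 := le_trans (opnorm2_ge0 S) Sc.
have : dot x (S *m x) ^+ 2 <= (c * sqnorm x) ^+ 2.
  apply: le_trans (cauchy_schwarz _ _) _.
  rewrite (_ : (c * _) ^+ 2 = sqnorm x * (c ^+ 2 * sqnorm x)); last by ring.
  by rewrite ler_wpM2l ?sqnorm_ge0 ?sqnorm_mul_le_of_opnorm.
rewrite -real_normK ?num_real // ler_pXn2r ?nnegrE ?mulr_ge0 ?sqnorm_ge0 //.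
by rewrite ler_norml => /andP[].
Qed.

End OperatorNorm.

Section LoewnerBounds.
Variables (R : realType) (k : nat).
Implicit Types (S : 'M[R]_k) (x y : 'cV[R]_k).

Lemma psd_sub_scalar_form S c :
  psd (S - c%:M) -> forall x, c * sqnorm x <= dot x (S *m x).
Proof.
by move=> S_ge x; have := S_ge x; rewrite formE mulmxBl mul_scalar_mx dotBr dotZr subr_ge0.
Qed.

Lemma psd_scalar_sub_form S c :
  psd (c%:M - S) -> forall x, dot x (S *m x) <= c * sqnorm x.
Proof.
by move=> S_le x; have := S_le x; rewrite formE mulmxBl mul_scalar_mx dotBr dotZr subr_ge0.
Qed.

Lemma unitmx_of_form_gt S c : 0 < c -> (forall x, c * sqnorm x <= dot x (S *m x)) ->
  S \in unitmx.
Proof.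
move=> c_gt0 S_ge; rewrite unitmxE -det_tr unitfE; apply/negP => /det0P [v v_neq0 vS0].
have Sv0 : S *m v^T = 0 by rewrite -[S]trmxK -trmx_mul vS0 trmx0.
have := S_ge v^T; rewrite Sv0 dot0r leNgt => /negP; apply.
by rewrite mulr_gt0 // sqnorm_gt0 -(inj_eq trmx_inj) trmxK trmx0.
Qed.

Lemma invmx_form_bounds S c : S^T = S -> 0 < c ->
  (forall x, c * sqnorm x <= dot x (S *m x)) ->
  forall y, 0 <= dot y (invmx S *m y) /\ c * dot y (invmx S *m y) <= sqnorm y.
Proof.
move=> Ss c_gt0 S_ge y; have S_unit := unitmx_of_form_gt c_gt0 S_ge.
set w := invmx S *m y; have y_Sw : y = S *m w by rewrite /w mulKVmx.
have t_w : dot y w = dot w (S *m w) by rewrite {1}y_Sw dotC.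
have w_ge := S_ge w; rewrite -t_w in w_ge.
have t_ge0 : 0 <= dot y w by apply: le_trans w_ge; rewrite mulr_ge0 ?sqnorm_ge0 ?ltW.
split => //; have [->|t_neq0] := eqVneq (dot y w) 0; first by rewrite mulr0 sqnorm_ge0.
have t_gt0 : 0 < dot y w by rewrite lt_def t_neq0.
rewrite -(ler_pM2r t_gt0) -mulrA -expr2.
apply: le_trans (ler_wpM2l (ltW c_gt0) (cauchy_schwarz y w)) _.
by rewrite mulrCA ler_wpM2l ?sqnorm_ge0.
Qed.

Lemma sqnorm_mul_le_of_form S c : S^T = S ->
  (forall x, 0 <= dot x (S *m x) <= c * sqnorm x) ->
  forall y, sqnorm (S *m y) <= c ^+ 2 * sqnorm y.
Proof.
move=> Ss S_bd y; have S_ge0 z : 0 <= dot z (S *m z) by case/andP: (S_bd z).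
have S_le z : dot z (S *m z) <= c * sqnorm z by case/andP: (S_bd z).
set w := S *m y; have := sym_form_cauchy_schwarz Ss S_ge0 y w.
have -> : dot y (S *m w) = sqnorm w by rewrite /sqnorm dotMr Ss.
have [->|w_neq0] := eqVneq w 0; first by rewrite /sqnorm dot0r mulr_ge0 ?sqr_ge0 ?sqnorm_ge0.
have w_gt0 : 0 < sqnorm w by rewrite sqnorm_gt0.
move=> /le_trans/(_ (ler_pM (S_ge0 y) (S_ge0 w) (S_le y) (S_le w))).
rewrite (_ : c * _ * (c * _) = c ^+ 2 * sqnorm y * sqnorm w); last by ring.
by rewrite [X in X <= _]expr2 ler_pM2r.
Qed.

End LoewnerBounds.

Local Notation rc R := (real_complex R).

Section UnitaryDiagonalization.
Local Open Scope sesquilinear_scope.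
Variables (R : realType) (k : nat) (S : 'M[R]_k) (P : 'M[R[i]]_k) (d : 'rV[R[i]]_k).
Hypotheses (P_unitary : P \is unitarymx) (d_real : d \is a realmx).
Hypothesis S_diag : map_mx (rc R) S = P^t* *m diag_mx d *m P.

Let P_unit : P \in unitmx := unitarymx_unit P_unitary.

Lemma diag_entry_real i : d 0 i = rc R (complex.Re (d 0 i)).
Proof. by rewrite RRe_real //; apply: (mxOverP d_real). Qed.

Lemma eigenvalue_diag i : eigenvalue S (complex.Re (d 0 i)).
Proof.
suff : eigenvalue (map_mx (rc R) S) (d 0 i) by rewrite {1}diag_entry_real eigenvalue_map.
apply/eigenvalueP; exists (delta_mx 0 i *m P); last first.
  rewrite mulmx_free_eq0 ?row_free_unit //; apply/negP => /eqP/matrixP/(_ 0 i)/eqP.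
  by rewrite !mxE !eqxx oner_eq0.
rewrite S_diag -invmx_unitary // !mulmxA mulmxK //.
by rewrite -[_ *m diag_mx _]rowE row_diag_mx -scalemxAl.
Qed.

Lemma forms_in_eigenbasis (x : 'cV[R]_k) (z := P *m map_mx (rc R) x) :
  rc R (dot x (S *m x)) = \sum_i (z i 0)^* * d 0 i * z i 0 /\
  rc R (sqnorm x) = \sum_i (z i 0)^* * z i 0.
Proof.
have x_real : map_mx Num.conj (map_mx (rc R) x) = map_mx (rc R) x.
  by apply/matrixP => a b; rewrite !mxE conj_Creal //; apply/complex_realP; eexists.
have xP : (map_mx (rc R) x)^T *m P^t* = (map_mx Num.conj z)^T.
  by rewrite /z map_mxM trmx_mul x_real -map_trmx.
have entry (Q : 'M[R]_1) : rc R (Q 0 0) = (map_mx (rc R) Q) 0 0 by rewrite mxE.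
split.
  rewrite /dot entry !map_mxM -map_trmx S_diag !mulmxA xP -mulmxA mxE.
  by apply: eq_bigr => i _; rewrite mul_mx_diag !mxE.
rewrite /sqnorm /dot entry map_mxM -map_trmx -[X in _ *m X]mul1mx.
rewrite -(mulVmx P_unit) invmx_unitary // !mulmxA xP -mulmxA mxE.
by apply: eq_bigr => i _; rewrite !mxE.
Qed.

Lemma exists_eigenvalue_le_form (x : 'cV[R]_k) : x != 0 ->
  exists2 e, eigenvalue S e & e * sqnorm x <= dot x (S *m x).
Proof.
move=> x_neq0; have [i0 _] : exists i : 'I_k, x i 0 != 0.
  apply/existsP; apply: contraNT x_neq0; rewrite negb_exists => /forallP x0.
  by apply/eqP/matrixP => i j; rewrite ord1 mxE; apply/eqP/negPn/x0.
have [j _ j_min] := @arg_minP _ R _ i0 xpredT (fun i => complex.Re (d 0 i)) isT.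
exists (complex.Re (d 0 j)); first exact: eigenvalue_diag.
have [Sx x2] := forms_in_eigenbasis x.
rewrite -lecR rmorphM /= Sx x2 mulr_sumr; apply: ler_sum => i _.
rewrite [_ * d 0 i]mulrC -mulrA; apply: ler_wpM2r; first by rewrite mulrC mul_conjC_ge0.
by rewrite [d 0 i]diag_entry_real lecR j_min.
Qed.

End UnitaryDiagonalization.

Lemma sym_exists_eigenvalue_le_form (R : realType) k (S : 'M[R]_k) (x : 'cV[R]_k) :
  S^T = S -> x != 0 -> exists2 e, eigenvalue S e & e * sqnorm x <= dot x (S *m x).
Proof.
move=> Ss; pose Sc := map_mx (rc R) S.
have Sc_herm : Sc \is hermsymmx.
  apply: realsym_hermsym; last by apply/mxOverP => i j; rewrite mxE; apply/complex_realP; eexists.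
  by apply/is_hermitianmxP; rewrite expr0 scale1r map_mx_id // map_trmx Ss.
apply: (@exists_eigenvalue_le_form _ _ _ _ (spectral_diag Sc) (spectral_unitarymx Sc)).
  exact: hermitian_spectral_diag_real.
rewrite -invmx_unitary ?spectral_unitarymx //.
exact/orthomx_spectralP/hermitian_normalmx.
Qed.

Lemma lambda_min_le_form (R : realType) k (S : 'M[R]_k) (x : 'cV[R]_k) :
  S^T = S -> pd S -> x != 0 -> lambda_min S * sqnorm x <= dot x (S *m x).
Proof.
move=> Ss S_pd x_neq0; have [e e_eig e_le] := sym_exists_eigenvalue_le_form Ss x_neq0.
apply: le_trans e_le; rewrite ler_wpM2r ?sqnorm_ge0 //.
apply: ge_inf => //; exists 0 => e' /eigenvalueP [v v_eig v_neq0].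
have Sv : S *m v^T = e' *: v^T by rewrite -{1}Ss -trmx_mul v_eig linearZ.
have vT_neq0 : v^T != 0 by rewrite -(inj_eq trmx_inj) trmxK trmx0.
have := S_pd _ vT_neq0; rewrite formE Sv dotZr pmulr_lgt0 ?sqnorm_gt0 //.
exact: ltW.
Qed.

Lemma Re_sum (R : realType) (I : Type) (r : seq I) (F : I -> R[i]) :
  complex.Re (\sum_(i <- r) F i) = \sum_(i <- r) complex.Re (F i).
Proof. exact: (raddf_sum (@complex.Re R : Rcomplex R -> R)). Qed.

Lemma Im_sum (R : realType) (I : Type) (r : seq I) (F : I -> R[i]) :
  complex.Im (\sum_(i <- r) F i) = \sum_(i <- r) complex.Im (F i).
Proof. exact: (raddf_sum (@complex.Im R : Rcomplex R -> R)). Qed.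

(* [eigenvalue] is defined through row eigenvectors, hence the transpose; [a] and [b] are
   the real and imaginary parts of the eigenvector. *)
Lemma cplx_eigenvalue_trmx_pair (R : realType) p (M : 'M[R]_p) (l0 l1 : R) :
  eigenvalue (cplx_mx M) (l0 +i* l1)%C ->
  exists a b : 'cV[R]_p, [/\ (a != 0) || (b != 0),
     M^T *m a = l0 *: a - l1 *: b & M^T *m b = l1 *: a + l0 *: b].
Proof.
move=> /eigenvalueP [v v_eig v_neq0].
exists (\col_i complex.Re (v 0 i)), (\col_i complex.Im (v 0 i)); split.
- apply: contraNT v_neq0; rewrite negb_or !negbK => /andP[/eqP Re0 /eqP Im0].
  apply/eqP/matrixP => i j; rewrite ord1 !mxE.
  move/matrixP/(_ j 0): Re0; move/matrixP/(_ j 0): Im0.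
  by rewrite !mxE; case: (v 0 j) => a b /= -> ->.
- apply/matrixP => j k; rewrite ord1 !mxE.
  move/matrixP/(_ 0 j)/(congr1 (@complex.Re _)): v_eig; rewrite !mxE Re_sum.
  rewrite (_ : complex.Re _ = l0 * complex.Re (v 0 j) - l1 * complex.Im (v 0 j)).
    move=> <-; apply: eq_bigr => i _; rewrite !mxE.
    by case: (v 0 i) => a b /=; rewrite mulr0 subr0 mulrC.
  by case: (v 0 j) => a b.
- apply/matrixP => j k; rewrite ord1 !mxE.
  move/matrixP/(_ 0 j)/(congr1 (@complex.Im _)): v_eig; rewrite !mxE Im_sum.
  rewrite (_ : complex.Im _ = l1 * complex.Re (v 0 j) + l0 * complex.Im (v 0 j)).
    move=> <-; apply: eq_bigr => i _; rewrite !mxE.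
    by case: (v 0 i) => a b /=; rewrite mulr0 add0r mulrC.
  by case: (v 0 j) => a b /=; rewrite addrC.
Qed.

Lemma cplx_eigenvalue_sqr_le_opnorm (R : realType) p (M : 'M[R]_p) (l0 l1 : R) :
  eigenvalue (cplx_mx M) (l0 +i* l1)%C -> l0 ^+ 2 + l1 ^+ 2 <= opnorm2 M ^+ 2.
Proof.
move=> /cplx_eigenvalue_trmx_pair [a [b [ab_neq0 Ma Mb]]].
have ab_gt0 : 0 < sqnorm a + sqnorm b.
  by case/orP: ab_neq0; rewrite -sqnorm_gt0 => ?; [apply: ltr_pwDl | apply: ltr_pwDr];
    rewrite ?sqnorm_ge0.
have images : sqnorm (M^T *m a) + sqnorm (M^T *m b) =
    (l0 ^+ 2 + l1 ^+ 2) * (sqnorm a + sqnorm b).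
  by rewrite Ma Mb /sqnorm !dotDl !dotNl !dotDr !dotNr !dotZl !dotZr (dotC b a); ring.
rewrite -(ler_pM2r ab_gt0) -images mulrDr -opnorm2_trmx.
by apply: lerD; apply: sqnorm_mul_le.
Qed.

Definition saddle_mx (R : realType) n m (A : 'M[R]_m) (B : 'M[R]_(n, m)) (C : 'M[R]_n) (r : R) :
  'M[R]_(n + m) := block_mx (- C) (- B) (r *: B^T) (- (r *: A)).

Section SaddlePointMatrix.
Variables (R : realType) (n m : nat) (A : 'M[R]_m) (B : 'M[R]_(n, m)) (C : 'M[R]_n).
Variables (mu L r : R).
Hypotheses (A_sym : A^T = A) (C_sym : C^T = C) (mu_gt0 : 0 < mu) (mu_le_L : mu <= L).
Hypotheses (A_ge : psd (A - mu%:M)) (A_le : psd (L%:M - A)).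
Hypotheses (B_le : opnorm2 B <= L) (C_le : opnorm2 C <= L) (r_gt0 : 0 < r).

Local Notation M := (saddle_mx A B C r).
Local Notation S := (C + B *m invmx A *m B^T).

Let L_gt0 : 0 < L. Proof. exact: lt_le_trans mu_le_L. Qed.

Lemma nonreal_eigen_scalar (X Y c a P Q l0 l1 : R) :
  0 <= X -> 0 <= Y -> 0 < X + Y -> - (L * X) <= c -> mu * Y <= a ->
  Q ^+ 2 <= L ^+ 2 * X * Y ->
  - c + r * P = l0 * X -> r * Q = l1 * X -> - P - r * a = l0 * Y -> Q = l1 * Y ->
  l1 != 0 -> l1 ^+ 2 <= r * L ^+ 2 /\ 2 * l0 <= L - r * mu.
Proof.
move=> X_ge0 Y_ge0 XY_gt0 c_ge a_ge Q_le ReX ImX ReY ImY l1_neq0.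
have X_rY : X = r * Y.
  by apply: (mulfI l1_neq0); rewrite -ImX ImY; ring.
have Y_gt0 : 0 < Y.
  by rewrite lt_def Y_ge0 andbT; apply: contraTneq XY_gt0 => Y0; rewrite X_rY Y0 mulr0 addr0 ltxx.
split.
  have Y2_gt0 : 0 < Y ^+ 2 by rewrite exprn_gt0.
  rewrite -(ler_pM2r Y2_gt0) -exprMn -ImY.
  apply: le_trans Q_le _; rewrite X_rY [X in _ <= X](_ : _ = L ^+ 2 * (r * Y) * Y) //.
  by ring.
have twice : 2 * l0 * X = - c - r ^+ 2 * a.
  have -> : 2 * l0 * X = l0 * X + r * (l0 * Y) by rewrite X_rY; ring.
  by rewrite -ReX -ReY; ring.
have X_gt0 : 0 < X by rewrite X_rY mulr_gt0.
rewrite -(ler_pM2r X_gt0) twice.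
by rewrite X_rY in c_ge *; nra.
Qed.

(* If lam >= 0, positivity of the Schur form gives mu X < (r mu + lam) Y, while the
   bound on C gives r (r mu + lam) Y <= (L - lam) X; together r mu < L - lam <= L. *)
Lemma real_eigen_scalar_lt0 (X Y c a p t lam : R) :
  L < r * mu -> 0 < X -> 0 <= Y -> - (L * X) <= c -> mu * Y <= a -> mu * t <= Y ->
  - c + r * p = lam * X -> - p - r * a = lam * Y ->
  0 < lam * (r * Y + lam * t) - lam * X -> lam < 0.
Proof.
move=> L_lt X_gt0 Y_ge0 c_ge a_ge t_le eX eY s_gt0.
rewrite ltNge; apply/negP => lam_ge0.
have lam_gt0 : 0 < lam by rewrite lt_def lam_ge0 andbT; apply: contraTneq s_gt0 => ->; nra.
have X_lt : X < r * Y + lam * t by rewrite -(ltr_pM2l lam_gt0) -subr_gt0.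
have e2 : mu * X < (r * mu + lam) * Y.
  have : lam * (mu * t) <= lam * Y by rewrite ler_wpM2l // ltW.
  have : mu * X < mu * (r * Y + lam * t) by rewrite ltr_pM2l.
  nra.
have e3 : r * ((r * mu + lam) * Y) <= (L - lam) * X.
  have c_eq : c = - (r ^+ 2 * a) - r * lam * Y - lam * X.
    have -> : c = r * p - lam * X by lra.
    have -> : p = - (r * a) - lam * Y by lra.
    by ring.
  have : r ^+ 2 * (mu * Y) <= r ^+ 2 * a by rewrite ler_wpM2l ?sqr_ge0.
  nra.
have K_gt0 : 0 < (r * mu + lam) * Y by apply: le_lt_trans e2; rewrite mulr_ge0 // ltW.
have Llam_gt0 : 0 < L - lam.
  by rewrite -(pmulr_lgt0 _ X_gt0); apply: lt_le_trans e3; rewrite mulr_gt0.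
have : r * mu * ((r * mu + lam) * Y) < (L - lam) * ((r * mu + lam) * Y).
  rewrite -mulrA mulrCA; apply: le_lt_trans (_ : mu * ((L - lam) * X) < _).
    by rewrite ler_wpM2l // ltW.
  by rewrite mulrCA ltr_pM2l.
rewrite ltr_pM2r //; lra.
Qed.

Lemma real_eigen_scalar (X Y c a p t lam lm : R) :
  L < r * mu -> lam <= - (r * mu) \/ 0 < X -> 0 <= Y ->
  - (L * X) <= c -> mu * Y <= a -> 0 <= t -> mu * t <= Y ->
  - c + r * p = lam * X -> - p - r * a = lam * Y ->
  (0 < X -> 0 < lam * (r * Y + lam * t) - lam * X) ->
  (0 < X -> lm * X <= lam * (r * Y + lam * t) - lam * X) ->
  lam < 0 /\ lam <= - Num.min L lm.
Proof.
move=> L_lt X_pos Y_ge0 c_ge a_ge t_ge0 t_le eX eY S_pos S_ge.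
have min_le : Num.min L lm <= L by rewrite ge_min lexx.
have [lam_le|lam_gt] := lerP lam (- (r * mu)); first by have := L_gt0; split; lra.
have X_gt0 : 0 < X by case: X_pos; lra.
have lam_lt0 := real_eigen_scalar_lt0 L_lt X_gt0 Y_ge0 c_ge a_ge t_le eX eY (S_pos X_gt0).
have q_ge0 : 0 <= r * Y + lam * t.
  have lamY : lam * Y <= lam * (mu * t) by rewrite ler_wnM2l // ltW.
  have rmuY : 0 <= (r * mu + lam) * Y by apply: mulr_ge0 => //; lra.
  by rewrite -(pmulr_rge0 _ mu_gt0); nra.
split=> //.
have : lm * X <= - lam * X.
  apply: le_trans (S_ge X_gt0) _.
  have : lam * (r * Y + lam * t) <= 0 by rewrite nmulr_rle0.
  lra.
rewrite ler_pM2r // => lm_le.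
have : Num.min L lm <= lm by rewrite ge_min lexx orbT.
lra.
Qed.

Lemma trmx_saddle_mul (x : 'cV[R]_n) (y : 'cV[R]_m) : M^T *m col_mx x y =
  col_mx (- (C *m x) + r *: (B *m y)) (- (B^T *m x) - r *: (A *m y)).
Proof.
rewrite /saddle_mx tr_block_mx !linearN /= !linearZ /= trmxK A_sym C_sym.
by rewrite mul_block_col !mulNmx -!scalemxAl mulNmx scalerN.
Qed.

Lemma saddle_mul (x : 'cV[R]_n) (y : 'cV[R]_m) : M *m col_mx x y =
  col_mx (- (C *m x) - B *m y) (r *: (B^T *m x) - r *: (A *m y)).
Proof. by rewrite mul_block_col !mulNmx -!scalemxAl. Qed.

Lemma opnorm_saddle_le : 1 <= r -> opnorm2 M <= 2 * r * L.
Proof.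
move=> r_ge1; apply: opnorm2_le => [|v]; first by rewrite !mulr_ge0 // ltW.
rewrite -(vsubmxK v) saddle_mul !sqnorm_col_mx.
set x := usubmx v; set y := dsubmx v.
have top := sqnormD_le (- (C *m x)) (- (B *m y)); rewrite !sqnormN in top.
have bot := sqnormD_le (r *: (B^T *m x)) (- (r *: (A *m y))).
rewrite sqnormN !sqnormZ in bot.
have Cx := sqnorm_mul_le_of_opnorm C_le x.
have By := sqnorm_mul_le_of_opnorm B_le y.
have BTx : sqnorm (B^T *m x) <= L ^+ 2 * sqnorm x.
  by apply: sqnorm_mul_le_of_opnorm; rewrite opnorm2_trmx.
have A_bd z : 0 <= dot z (A *m z) <= L * sqnorm z.
  rewrite psd_scalar_sub_form // andbT.
  by apply: le_trans (psd_sub_scalar_form A_ge z); rewrite mulr_ge0 ?sqnorm_ge0 ?ltW.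
have Ay := sqnorm_mul_le_of_form A_sym A_bd y.
have r2_ge0 : 0 <= r ^+ 2 := sqr_ge0 r.
have BTx' := ler_wpM2l r2_ge0 BTx; have Ay' := ler_wpM2l r2_ge0 Ay.
have r2_ge1 : 0 <= r ^+ 2 - 1 by rewrite subr_ge0 exprn_ege1.
have := mulr_ge0 r2_ge1 (mulr_ge0 (sqr_ge0 L) (addr_ge0 (sqnorm_ge0 x) (sqnorm_ge0 y))).
nra.
Qed.

Lemma saddle_cplx_eigenvectors l0 l1 : eigenvalue (cplx_mx M) (l0 +i* l1)%C ->
  exists (x1 x2 : 'cV[R]_n) (y1 y2 : 'cV[R]_m),
  [/\ (col_mx x1 y1 != 0) || (col_mx x2 y2 != 0),
      - (C *m x1) + r *: (B *m y1) = l0 *: x1 - l1 *: x2,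
      - (B^T *m x1) - r *: (A *m y1) = l0 *: y1 - l1 *: y2,
      - (C *m x2) + r *: (B *m y2) = l1 *: x1 + l0 *: x2 &
      - (B^T *m x2) - r *: (A *m y2) = l1 *: y1 + l0 *: y2].
Proof.
move=> /cplx_eigenvalue_trmx_pair [a [b []]]; rewrite -(vsubmxK a) -(vsubmxK b).
move=> ab_neq0; rewrite !trmx_saddle_mul !scale_col_mx opp_col_mx !add_col_mx.
move=> /eq_col_mx [E1 E2] /eq_col_mx [E3 E4].
by exists (usubmx a), (usubmx b), (dsubmx a), (dsubmx b).
Qed.

Lemma saddle_eigen_nonreal l0 l1 : eigenvalue (cplx_mx M) (l0 +i* l1)%C -> l1 != 0 ->
  l1 ^+ 2 <= r * L ^+ 2 /\ 2 * l0 <= L - r * mu.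
Proof.
move=> /saddle_cplx_eigenvectors [x1 [x2 [y1 [y2 [xy_neq0 E1 E2 E3 E4]]]]].
have := congr1 (dot x1) E1; have := congr1 (dot x2) E1.
have := congr1 (dot x1) E3; have := congr1 (dot x2) E3.
have := congr1 (dot y1) E2; have := congr1 (dot y2) E2.
have := congr1 (dot y1) E4; have := congr1 (dot y2) E4.
rewrite !(dotDr, dotBr, dotNr, dotZr) !dot_trmx (dot_sym x2 x1 C_sym) (dot_sym y2 y1 A_sym).
rewrite (dotC x2 x1) (dotC y2 y1) -/(sqnorm x1) -/(sqnorm x2) -/(sqnorm y1) -/(sqnorm y2).
move=> f8 f7 f6 f5 f4 f3 f2 f1.
(* With z = x1 + i x2 and w = y1 + i y2: z^* C z, w^* A w, and the real and imaginary parts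
   of z^* B w. *)
apply: (@nonreal_eigen_scalar (sqnorm x1 + sqnorm x2) (sqnorm y1 + sqnorm y2)
  (dot x1 (C *m x1) + dot x2 (C *m x2)) (dot y1 (A *m y1) + dot y2 (A *m y2))
  (dot x1 (B *m y1) + dot x2 (B *m y2)) (dot x1 (B *m y2) - dot x2 (B *m y1))).
- by rewrite addr_ge0 ?sqnorm_ge0.
- by rewrite addr_ge0 ?sqnorm_ge0.
- rewrite -!sqnorm_gt0 !sqnorm_col_mx in xy_neq0.
  have := sqnorm_ge0 x1; have := sqnorm_ge0 x2; have := sqnorm_ge0 y1; have := sqnorm_ge0 y2.
  by case/orP: xy_neq0; intros; lra.
- by have := form_ge_of_opnorm C_le x1; have := form_ge_of_opnorm C_le x2; lra.
- by have := psd_sub_scalar_form A_ge y1; have := psd_sub_scalar_form A_ge y2; lra.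
- rewrite -dotNr -dot_col_mx; apply: le_trans (cauchy_schwarz _ _) _.
  rewrite !sqnorm_col_mx sqnormN -mulrA mulrCA.
  apply: ler_wpM2l; first by rewrite addr_ge0 ?sqnorm_ge0.
  by rewrite mulrDr addrC; apply: lerD; apply: sqnorm_mul_le_of_opnorm.
- lra.
- lra.
- lra.
- lra.
Qed.

Lemma saddle_eigen_Im_le l0 l1 : eigenvalue (cplx_mx M) (l0 +i* l1)%C ->
  `|l1| <= Num.sqrt r * L.
Proof.
move=> eig; have L_ge0 := ltW L_gt0.
have [->|/(saddle_eigen_nonreal eig)[Im_le _]] := eqVneq l1 0.
  by rewrite normr0 mulr_ge0 ?sqrtr_ge0.
rewrite -sqrtr_sqr (_ : Num.sqrt r * L = Num.sqrt (r * L ^+ 2)).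
  by rewrite ler_sqrt // mulr_ge0 ?sqr_ge0 // ltW.
by rewrite sqrtrM ?ltW // sqrtr_sqr ger0_norm.
Qed.

Lemma schur_complement_form (x : 'cV[R]_n) (y : 'cV[R]_m) lam :
  - (B^T *m x) - r *: (A *m y) = lam *: y ->
  dot x (S *m x) = dot x (C *m x) + lam ^+ 2 * dot y (invmx A *m y)
                   + 2 * lam * r * sqnorm y + r ^+ 2 * dot y (A *m y).
Proof.
move=> Ey; have A_unit := unitmx_of_form_gt mu_gt0 (psd_sub_scalar_form A_ge).
have BTx : B^T *m x = - (lam *: y + r *: (A *m y)) by rewrite -Ey subrK opprK.
rewrite mulmxDl dotDr -!mulmxA (dotMr B) BTx mulmxN dotNl dotNr opprK.
rewrite mulmxDr -!scalemxAr mulKmx // !dotDl !dotDr !dotZl !dotZr.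
rewrite (dotC (A *m y) (invmx A *m y)) (dotMr A (invmx A *m y) y) A_sym mulKVmx //.
by rewrite (dotC (A *m y) y) -/(sqnorm y); ring.
Qed.

Lemma saddle_real_eigenvector (x : 'cV[R]_n) (y : 'cV[R]_m) lam :
  L < r * mu -> pd S -> col_mx x y != 0 ->
  - (C *m x) + r *: (B *m y) = lam *: x -> - (B^T *m x) - r *: (A *m y) = lam *: y ->
  lam < 0 /\ lam <= - Num.min L (lambda_min S).
Proof.
move=> L_lt S_pd xy_neq0 Ex Ey.
have S_sym : S^T = S by rewrite linearD /= !trmx_mul trmxK trmx_inv A_sym C_sym mulmxA.
have [t_ge0 t_le] := invmx_form_bounds A_sym mu_gt0 (psd_sub_scalar_form A_ge) y.
have fx := congr1 (dot x) Ex; rewrite dotDr dotNr !dotZr -/(sqnorm x) in fx.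
have fy := congr1 (dot y) Ey; rewrite dotBr dotNr !dotZr dot_trmx -/(sqnorm y) in fy.
have schur : dot x (S *m x) = lam * (r * sqnorm y + lam * dot y (invmx A *m y)) - lam * sqnorm x.
  rewrite (schur_complement_form Ey).
  have -> : dot x (C *m x) = r * dot x (B *m y) - lam * sqnorm x by lra.
  have -> : dot x (B *m y) = - (r * dot y (A *m y)) - lam * sqnorm y by lra.
  by ring.
have x_pos : lam <= - (r * mu) \/ 0 < sqnorm x.
  have [x0|] := eqVneq x 0; last by rewrite -sqnorm_gt0; right.
  left; have y_neq0 : y != 0 by apply: contraNneq xy_neq0 => ->; rewrite x0 col_mx0.
  have Y_gt0 : 0 < sqnorm y by rewrite sqnorm_gt0.
  rewrite x0 dotC dot0r in fy; have a_ge := psd_sub_scalar_form A_ge y.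
  have ra : r * (mu * sqnorm y) <= r * dot y (A *m y) by rewrite ler_pM2l.
  by rewrite oppr0 add0r in fy; rewrite -(ler_pM2r Y_gt0) -fy mulNr -mulrA lerN2.
apply: (@real_eigen_scalar (sqnorm x) (sqnorm y) (dot x (C *m x)) (dot y (A *m y))
  (dot x (B *m y)) (dot y (invmx A *m y))) => //.
- exact: sqnorm_ge0.
- exact: form_ge_of_opnorm.
- exact: psd_sub_scalar_form.
- by rewrite sqnorm_gt0 -schur -formE; apply: S_pd.
- by rewrite sqnorm_gt0 -schur; apply: lambda_min_le_form.
Qed.

Lemma saddle_eigen_real l0 : L < r * mu -> pd S -> eigenvalue (cplx_mx M) (l0 +i* 0)%C ->
  l0 < 0 /\ l0 <= - Num.min L (lambda_min S).
Proof.
move=> L_lt S_pd /saddle_cplx_eigenvectors [x1 [x2 [y1 [y2 [xy_neq0 E1 E2 E3 E4]]]]].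
rewrite !scale0r ?subr0 ?add0r in E1 E2 E3 E4.
by case/orP: xy_neq0 => xy_neq0; apply: saddle_real_eigenvector xy_neq0 _ _.
Qed.

End SaddlePointMatrix.

Unset Implicit Arguments.
Set Strict Implicit.

Theorem lemma1 (R : realType) (m n : nat)
  (A : 'M[R]_m) (B : 'M[R]_(n, m)) (C : 'M[R]_n) (mu L r : R) (l0 l1 : R) :
  A^T = A -> C^T = C ->
  0 < mu -> mu <= L ->
  psd (A - mu%:M) -> psd (L%:M - A) ->
  opnorm2 B <= L -> opnorm2 C <= L ->
  pd (C + B *m invmx A *m B^T) ->
  0 < r ->
  let M : 'M[R]_(n + m) := block_mx (- C) (- B) (r *: B^T) (- (r *: A)) in
  let kappa := L / mu in
  let mu_x := Num.min L (lambda_min (C + B *m invmx A *m B^T)) in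
  eigenvalue (cplx_mx M) (l0 +i* l1)%C ->
  [/\ `|l1| <= Num.sqrt r * L,
      (l1 != 0 -> l0 <= - (mu * (r - kappa) / 2)),
      (1 <= r -> l0 ^+ 2 + l1 ^+ 2 <= opnorm2 M ^+ 2
                 /\ opnorm2 M ^+ 2 <= 4 * r ^+ 2 * L ^+ 2),
      (kappa < r -> l1 = 0 -> l0 <= - mu_x)
    & (kappa < r -> l0 < 0)].
Proof.
move=> A_sym C_sym mu_gt0 mu_le_L A_ge A_le B_le C_le S_pd r_gt0 M kappa mu_x eig.
have L_gt0 : 0 < L := lt_le_trans mu_gt0 mu_le_L.
have kappa_ltE : (kappa < r) = (L < r * mu) by rewrite ltr_pdivrMr.
have nonreal := saddle_eigen_nonreal A_sym C_sym A_ge B_le C_le r_gt0 eig.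
have real : kappa < r -> l1 = 0 -> l0 < 0 /\ l0 <= - mu_x.
  move=> kappa_lt l1_0; rewrite kappa_ltE in kappa_lt; rewrite l1_0 in eig.
  exact: (saddle_eigen_real A_sym C_sym mu_gt0 mu_le_L A_ge C_le r_gt0 kappa_lt S_pd eig).
have Re_nonreal : l1 != 0 -> l0 <= - (mu * (r - kappa) / 2).
  move=> /nonreal[_ Re_le]; rewrite (_ : mu * (r - kappa) = r * mu - L); first lra.
  by rewrite /kappa; field; rewrite gt_eqF.
split.
- exact: (saddle_eigen_Im_le A_sym C_sym mu_gt0 mu_le_L A_ge B_le C_le r_gt0 eig).
- exact: Re_nonreal.
- move=> r_ge1; split; first exact: cplx_eigenvalue_sqr_le_opnorm eig.
  rewrite (_ : 4 * r ^+ 2 * L ^+ 2 = (2 * r * L) ^+ 2); last by ring.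
  have M_le := opnorm_saddle_le A_sym mu_gt0 mu_le_L A_ge A_le B_le C_le r_gt0 r_ge1.
  by rewrite ler_pXn2r // nnegrE ?opnorm2_ge0 // !mulr_ge0 // ltW.
- by move=> kappa_lt l1_0; case: (real kappa_lt l1_0).
- move=> kappa_lt; have [l1_0|l1_neq0] := eqVneq l1 0; first by case: (real kappa_lt l1_0).
  apply: le_lt_trans (Re_nonreal l1_neq0) _; rewrite oppr_lt0 divr_gt0 // mulr_gt0 //.
  by rewrite subr_gt0.
Qed.
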